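(* Let $\mathcal{H}=\bigotimes_{i=1}^n\mathbb{C}^{d_i}$, let $|\psi\rangle\in\mathcal{H}$ be a fully entangled pure state whose stabilizer $\mathcal{S}_\psi$ consists only of unitary operators (i.e. $\mathcal{S}_\psi\subseteq U(d_1)\otimes\cdots\otimes U(d_n)$), and let $g=g_1\otimes\cdots\otimes g_n$, $h=h_1\otimes\cdots\otimes h_n$ with $g_i,h_i\in GL(d_i,\mathbb{C})$ such that $\|g|\psi\rangle\|=\|h|\psi\rangle\|=1$. Put $G=g^\dagger g$, $H=h^\dagger h$. If $g|\psi\rangle$ can be transformed into $h|\psi\rangle$ via SEP, then $\operatorname{tr}(G)\ge\operatorname{tr}(H)$. Moreover, if $\operatorname{tr}(G)=\operatorname{tr}(H)$, then $g|\psi\rangle$ can be transformed into $h|\psi\rangle$ via SEP if and only if there exist finitely many probabilities $p_k\ge0$ with $\sum_kp_k=1$ and symmetries $S_k\in\mathcal{S}_\psi$ such that $\sum_kp_kS_k^\dagger HS_k=G$, i.e. if and only if the transformation is possible via $\mathrm{SEP}_1$.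
   Context: A pure state is fully entangled if each single-party reduced density matrix $\rho_i$ has rank $d_i$. The stabilizer $\mathcal{S}_\psi$ is the set of operators $S=S^{(1)}\otimes\cdots\otimes S^{(n)}$ with $S^{(i)}\in GL(d_i,\mathbb{C})$ and $S|\psi\rangle=|\psi\rangle$. A CPTP map on $\mathcal{B}(\mathcal{H})$ is in SEP if it has a Kraus decomposition with all Kraus operators of product form $\bigotimes_jK^{(j)}$, $K^{(j)}\in M(d_j,\mathbb{C})$; it is in $\mathrm{SEP}_1$ if moreover all $K^{(j)}$ can be chosen in $GL(d_j,\mathbb{C})$. A state $|\alpha\rangle$ can be transformed into $|\beta\rangle$ via a class of maps if some map $\Lambda$ in the class satisfies $\Lambda(|\alpha\rangle\langle\alpha|)=|\beta\rangle\langle\beta|$. *)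

From HB Require Import structures.
From mathcomp Require Import all_boot all_order all_algebra.
From mathcomp Require Import complex reals.
Set Implicit Arguments. Unset Strict Implicit. Unset Printing Implicit Defensive.
Import Order.TTheory GRing.Theory Num.Theory.
Local Open Scope ring_scope.

Section Multipartite.
Variable R : realType.
Local Notation C := (R[i]).
Variable n : nat.
Variable d : 'I_n -> nat.

(* Computational basis of H = (x)_{i} C^{d_i}: tuples (k_1,...,k_n), k_i < d_i. *)
Definition idx := {dffun forall i : 'I_n, 'I_(d i)}.

Definition vec := idx -> C.
Definition op := idx -> idx -> C.

Definition locop := forall i : 'I_n, 'M[C]_(d i).

Definition tens (K : locop) : op :=
  fun x y => \prod_(i < n) K i (x i) (y i).

Definition opapp (A : op) (v : vec) : vec := fun x => \sum_y A x y * v y.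
Definition opmul (A B : op) : op := fun x z => \sum_y A x y * B y z.
Definition opadj (A : op) : op := fun x y => (A y x)^*.
Definition opid : op := fun x y => (x == y)%:R.
Definition optr (A : op) : C := \sum_x A x x.
Definition outer (v w : vec) : op := fun x y => v x * (w y)^*.
Definition vnorm2 (v : vec) : C := \sum_x v x * (v x)^*.

Definition mxadj m (M : 'M[C]_m) : 'M[C]_m := (map_mx Num.conj M)^T.
Definition unitary m (M : 'M[C]_m) : Prop := M *m mxadj M = 1%:M.

(* Single-party reduced density matrix rho_i = tr_{not i} |psi><psi|. *)
Definition reduced (psi : vec) (i : 'I_n) : 'M[C]_(d i) :=
  \matrix_(a, b) \sum_(x : {dffun forall j : 'I_n, 'I_(d j)} | x i == a)
     \sum_(y : {dffun forall j : 'I_n, 'I_(d j)} | (y i == b) &&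
        [forall j, (j != i) ==> (x j == y j)]) psi x * (psi y)^*.

Definition fully_entangled (psi : vec) : Prop :=
  forall i : 'I_n, \rank (reduced psi i) = d i.

Definition in_stab (psi : vec) (S : locop) : Prop :=
  (forall i, S i \in unitmx) /\ opapp (tens S) psi = psi.

Definition stab_unitary (psi : vec) : Prop :=
  forall S : locop, in_stab psi S ->
    exists U : locop, (forall i, unitary (U i)) /\ tens U = tens S.

Definition kraus_apply m (K : 'I_m -> locop) (rho : op) : op :=
  fun x y => \sum_(k < m) opmul (opmul (tens (K k)) rho) (opadj (tens (K k))) x y.

Definition kraus_tp m (K : 'I_m -> locop) : Prop :=
  (fun x y => \sum_(k < m) opmul (opadj (tens (K k))) (tens (K k)) x y) = opid.

Definition sep_transforms (alpha beta : vec) : Prop :=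
  exists m (K : 'I_m -> locop), kraus_tp K /\
    kraus_apply K (outer alpha alpha) = outer beta beta.

Definition sep1_transforms (alpha beta : vec) : Prop :=
  exists m (K : 'I_m -> locop), (forall k i, K k i \in unitmx) /\ kraus_tp K /\
    kraus_apply K (outer alpha alpha) = outer beta beta.

End Multipartite.

From Pilot Require Import Defs.
From HB Require Import structures.
From mathcomp Require Import all_boot all_order all_algebra.
From mathcomp Require Import complex reals ring.
From Stdlib Require Import FunctionalExtensionality.
Import Order.TTheory GRing.Theory Num.Theory.
Local Open Scope ring_scope.
Set Implicit Arguments. Unset Strict Implicit. Unset Printing Implicit Defensive.

(* For a SEP channel with Kraus operators K_k sending g psi to the pure state h psi, every
   K_k g psi equals c_k h psi, with sum_k |c_k|^2 = 1.  Then T_k = h^-1 K_k g satisfies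
   T_k psi = c_k psi; full entanglement makes its local factors invertible, so for c_k <> 0 the
   operator T_k / c_k lies in the stabilizer and is therefore a unitary S_k.  Hence
   g^+ K_k^+ K_k g = |c_k|^2 S_k^+ H S_k when c_k <> 0, and summing over k with
   sum_k K_k^+ K_k = 1 gives G = sum_k |c_k|^2 S_k^+ H S_k + P with P >= 0 collecting the
   terms with c_k = 0.  Taking traces, tr G = tr H + tr P >= tr H, and equality forces P = 0.
   Conversely, a decomposition G = sum_k p_k S_k^+ H S_k is realised within SEP_1 by the
   Kraus operators sqrt(p_k) h S_k g^-1. *)

Lemma bigA_distr_dffun (R : comPzSemiRingType) (I : finType) (T_ : I -> finType)
    (F : forall i, T_ i -> R) :
  \prod_i \sum_(b : T_ i) F i b = \sum_(x : {dffun forall i, T_ i}) \prod_i F i (x i).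
Proof.
pose P_ i := [ffun b : T_ i => F i b].
transitivity (\prod_i \sum_(b : T_ i) P_ i b).
  by apply: eq_bigr => i _; apply: eq_bigr => b _; rewrite ffunE.
under eq_bigr => i _ do rewrite (big_tag (fun i => P_ i) i).
rewrite bigA_distr_big_dep -(big_fprod 1 +%R P_).
rewrite (reindex (@fprod_of_dffun _ T_)); last exact/onW_bij/fprod_of_dffun_bij.
apply: eq_bigr => x _; apply: eq_bigr => i _.
by rewrite ffunE /fprod_of_dffun fprodE.
Qed.

Lemma sum_enum_val_support (V : nmodType) (I : finType) (A : pred I) (F : I -> V) :
  (forall i, ~~ A i -> F i = 0) -> \sum_(j < #|A|) F (enum_val j) = \sum_i F i.
Proof.
move=> F0; rewrite -big_enum_val [RHS](bigID A) /=.
by rewrite [X in _ + X]big1 ?addr0.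
Qed.

Section Operators.
Variables (R : realType) (n : nat) (d : 'I_n -> nat).
Local Notation C := R[i].
Local Notation idx := (idx d).
Local Notation vec := (vec R d).
Local Notation op := (op R d).
Local Notation locop := (locop R d).
Local Notation tens := (@tens R n d).
Local Notation opapp := (@opapp R n d).
Local Notation opmul := (@opmul R n d).
Local Notation opadj := (@opadj R n d).
Local Notation opid := (@opid R n d).
Local Notation optr := (@optr R n d).
Local Notation outer := (@outer R n d).
Implicit Types (A B X : op) (psi v w : vec) (c : C).

Definition opscale c A : op := fun x y => c * A x y.
Definition vscale c v : vec := fun x => c * v x.
Definition opadd A B : op := fun x y => A x y + B x y.
Definition opsum m (F : 'I_m -> op) : op := fun x y => \sum_(k < m) F k x y.
Definition op0 : op := fun _ _ => 0.

Lemma opP A B : (forall x y, A x y = B x y) -> A = B.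
Proof. by move=> eqAB; do 2!apply: functional_extensionality => ?. Qed.

Lemma vecP v w : (forall x, v x = w x) -> v = w.
Proof. exact: functional_extensionality. Qed.

Lemma opmulA A B X : opmul (opmul A B) X = opmul A (opmul B X).
Proof.
apply: opP => x z; rewrite /Defs.opmul.
under eq_bigr do rewrite big_distrl /=.
rewrite exchange_big; apply: eq_bigr => y _.
by rewrite big_distrr /=; apply: eq_bigr => w _; rewrite mulrA.
Qed.

Lemma opapp_mul A B v : opapp (opmul A B) v = opapp A (opapp B v).
Proof.
apply: vecP => x; rewrite /Defs.opapp /Defs.opmul.
under eq_bigr do rewrite big_distrl /=.
rewrite exchange_big; apply: eq_bigr => y _.
by rewrite big_distrr /=; apply: eq_bigr => w _; rewrite mulrA.
Qed.

Lemma opmul1l A : opmul opid A = A.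
Proof.
apply: opP => x z; rewrite /Defs.opmul /Defs.opid (bigD1 x) //= eqxx mul1r.
by rewrite big1 ?addr0 // => y /negbTE; rewrite eq_sym => ->; rewrite mul0r.
Qed.

Lemma opmul1r A : opmul A opid = A.
Proof.
apply: opP => x z; rewrite /Defs.opmul (bigD1 z) //= /Defs.opid eqxx mulr1.
by rewrite big1 ?addr0 // => y /negbTE ->; rewrite mulr0.
Qed.

Lemma opapp1 v : opapp opid v = v.
Proof.
apply: vecP => x; rewrite /Defs.opapp (bigD1 x) //= /Defs.opid eqxx mul1r.
by rewrite big1 ?addr0 // => y /negbTE; rewrite eq_sym => ->; rewrite mul0r.
Qed.

Lemma opadj_mul A B : opadj (opmul A B) = opmul (opadj B) (opadj A).
Proof.
apply: opP => x y; rewrite /Defs.opadj /Defs.opmul rmorph_sum.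
by apply: eq_bigr => z _; rewrite rmorphM mulrC.
Qed.

Lemma opadj1 : opadj opid = opid.
Proof. by apply: opP => x y; rewrite /Defs.opadj /Defs.opid eq_sym conjC_nat. Qed.

Lemma opmulZl c A B : opmul (opscale c A) B = opscale c (opmul A B).
Proof.
apply: opP => x y; rewrite /Defs.opmul /opscale big_distrr /=.
by apply: eq_bigr => z _; rewrite mulrA.
Qed.

Lemma opmulZr c A B : opmul A (opscale c B) = opscale c (opmul A B).
Proof.
apply: opP => x y; rewrite /Defs.opmul /opscale big_distrr /=.
by apply: eq_bigr => z _; rewrite mulrCA.
Qed.

Lemma opadjZ c A : opadj (opscale c A) = opscale c^* (opadj A).
Proof. by apply: opP => x y; rewrite /Defs.opadj /opscale rmorphM. Qed.

Lemma opappZ c A v : opapp (opscale c A) v = vscale c (opapp A v).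
Proof.
apply: vecP => x; rewrite /Defs.opapp /opscale /vscale big_distrr /=.
by apply: eq_bigr => z _; rewrite mulrA.
Qed.

Lemma opappZv c A v : opapp A (vscale c v) = vscale c (opapp A v).
Proof.
apply: vecP => x; rewrite /Defs.opapp /vscale big_distrr /=.
by apply: eq_bigr => z _; rewrite mulrCA.
Qed.

Lemma opmul_suml m (F : 'I_m -> op) B :
  opmul (opsum F) B = opsum (fun k => opmul (F k) B).
Proof.
apply: opP => x y; rewrite /Defs.opmul /opsum.
by under eq_bigr do rewrite big_distrl /=; rewrite exchange_big.
Qed.

Lemma opmul_sumr m (F : 'I_m -> op) A :
  opmul A (opsum F) = opsum (fun k => opmul A (F k)).
Proof.
apply: opP => x y; rewrite /Defs.opmul /opsum.
by under eq_bigr do rewrite big_distrr /=; rewrite exchange_big.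
Qed.

Lemma optr_mulC A B : optr (opmul A B) = optr (opmul B A).
Proof.
rewrite /Defs.optr /Defs.opmul exchange_big.
by apply: eq_bigr => x _; apply: eq_bigr => y _; rewrite mulrC.
Qed.

Lemma optrZ c A : optr (opscale c A) = c * optr A.
Proof. by rewrite /Defs.optr /opscale big_distrr. Qed.

Lemma optrD A B : optr (opadd A B) = optr A + optr B.
Proof. by rewrite /Defs.optr /opadd big_split. Qed.

Lemma optr_sum m (F : 'I_m -> op) : optr (opsum F) = \sum_(k < m) optr (F k).
Proof. by rewrite /Defs.optr /opsum exchange_big. Qed.

Lemma tens_mul (A B : locop) : opmul (tens A) (tens B) = tens (fun i => A i *m B i).
Proof.
apply: opP => x z; rewrite /Defs.opmul /Defs.tens.
under [RHS]eq_bigr do rewrite mxE.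
by rewrite bigA_distr_dffun; apply: eq_bigr => y _; rewrite -big_split.
Qed.

Lemma tens_adj (A : locop) : opadj (tens A) = tens (fun i => mxadj (A i)).
Proof.
apply: opP => x y; rewrite /Defs.opadj /Defs.tens rmorph_prod.
by apply: eq_bigr => i _; rewrite !mxE.
Qed.

Lemma tens1 : tens (fun i => 1%:M) = opid.
Proof.
apply: opP => x y; rewrite /Defs.tens /Defs.opid.
have [->|/eqP neq_xy] := eqVneq x y; first by rewrite big1 // => i _; rewrite mxE eqxx.
have [i neq_i] : exists i, x i != y i.
  by apply/existsP; apply: contra_notT neq_xy => /existsPn xy; apply/ffunP => i; apply/eqP/negPn.
by rewrite (bigD1 i) //= mxE (negbTE neq_i) mul0r.
Qed.

Definition lscale (i0 : 'I_n) c (K : locop) : locop :=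
  fun i => if i == i0 then c *: K i else K i.

Lemma tens_lscale i0 c K : tens (lscale i0 c K) = opscale c (tens K).
Proof.
apply: opP => x y; rewrite /Defs.tens /opscale (bigD1 i0) // [in RHS](bigD1 i0) //=.
rewrite /lscale eqxx mxE -mulrA.
by do 2 congr (_ * _); apply: eq_bigr => i /negbTE ->.
Qed.

Lemma lscale_unitmx i0 c K : c != 0 -> (forall i, K i \in unitmx) ->
  forall i, lscale i0 c K i \in unitmx.
Proof. by move=> c0 unitK i; rewrite /lscale; case: eqP; rewrite ?unitmxZ ?unitfE. Qed.

Definition linv (K : locop) : locop := fun i => invmx (K i).

Lemma tens_linv K : (forall i, K i \in unitmx) ->
  opmul (tens K) (tens (linv K)) = opid /\ opmul (tens (linv K)) (tens K) = opid.
Proof.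
move=> unitK; rewrite !tens_mul -tens1; split; congr tens;
  apply: functional_extensionality_dep => i; [exact: mulmxV | exact: mulVmx].
Qed.

Lemma tens_unitary (U : locop) : (forall i, unitary (U i)) ->
  opmul (tens U) (opadj (tens U)) = opid.
Proof.
by move=> unitaryU; rewrite tens_adj tens_mul -tens1; congr tens;
  apply: functional_extensionality_dep.
Qed.

Lemma unitary_unitmx m (M : 'M[C]_m) : unitary M -> M \in unitmx.
Proof. by case/mulmx1_unit. Qed.

Lemma kraus_apply_outer m (K : 'I_m -> locop) v x y :
  kraus_apply K (outer v v) x y =
  \sum_(k < m) opapp (tens (K k)) v x * (opapp (tens (K k)) v y)^*.
Proof.
apply: eq_bigr => k _; rewrite /Defs.opmul /Defs.outer /Defs.opapp /Defs.opadj.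
rewrite rmorph_sum big_distrr /=; apply: eq_bigr => z _.
rewrite !big_distrl /=; apply: eq_bigr => u _.
by rewrite rmorphM; ring.
Qed.

Definition ip v w : C := \sum_x (v x)^* * w x.

Lemma ip_conj v w : ip v w = (ip w v)^*.
Proof. by rewrite /ip rmorph_sum; apply: eq_bigr => x _; rewrite rmorphM /= conjCK mulrC. Qed.

Lemma ip_eq0 v : ip v v = 0 -> v = (fun _ => 0).
Proof.
move/eqP; rewrite psumr_eq0 => [/allP v0|x _]; last by rewrite mulrC mul_conjC_ge0.
by apply: vecP => x; move: (v0 x (mem_index_enum x)); rewrite mulrC mul_conjC_eq0 => /eqP.
Qed.

Lemma ip_mul_conjC v w : ip v w * (ip v w)^* =
  \sum_x \sum_y ((v x)^* * v y) * (w x * (w y)^*).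
Proof.
rewrite /ip rmorph_sum big_distrl /=; apply: eq_bigr => x _.
rewrite big_distrr /=; apply: eq_bigr => y _.
by rewrite rmorphM /= conjCK; ring.
Qed.

Section OuterSum.
Variables (m : nat) (w : 'I_m -> vec) (b : vec).
Hypothesis outer_sum : forall x y, \sum_(k < m) w k x * (w k y)^* = b x * (b y)^*.

Lemma outer_sum_ip v :
  \sum_(k < m) ip v (w k) * (ip v (w k))^* = ip v b * (ip v b)^*.
Proof.
rewrite ip_mul_conjC; under eq_bigr do rewrite ip_mul_conjC.
rewrite exchange_big; apply: eq_bigr => x _.
by rewrite exchange_big; apply: eq_bigr => y _; rewrite -big_distrr outer_sum.
Qed.

(* Applied to the remainder r = w_k - <b, w_k> b, which is orthogonal to b, the identity
   above gives <r, w_k> = 0, while <r, w_k> = <r, r>. *)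
Lemma outer_sum_collinear : vnorm2 b = 1 ->
  (forall k, w k = vscale (ip b (w k)) b) /\
  \sum_(k < m) ip b (w k) * (ip b (w k))^* = 1.
Proof.
move=> b1; have ip_bb : ip b b = 1.
  by rewrite -b1 /ip /vnorm2; apply: eq_bigr => x _; rewrite mulrC.
split=> [k|]; last by rewrite outer_sum_ip ip_bb conjC1 mulr1.
set c := ip b (w k); pose r x := w k x - c * b x.
have ip_br : ip b r = 0.
  rewrite /ip /r; under eq_bigr do rewrite mulrBr mulrCA.
  by rewrite sumrB -big_distrr /= -/(ip b b) ip_bb mulr1 subrr.
have ip_rb : ip r b = 0 by rewrite ip_conj ip_br conjC0.
have /eqP := outer_sum_ip r; rewrite ip_rb mul0r.
rewrite psumr_eq0 => [/allP/(_ k (mem_index_enum k))|j _]; last exact: mul_conjC_ge0.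
rewrite mul_conjC_eq0 => /eqP ip_rw.
have ip_rr : ip r r = ip r (w k) - c * ip r b.
  rewrite /ip big_distrr -sumrB; apply: eq_bigr => x _ /=; rewrite /r; ring.
move: ip_rr; rewrite ip_rw ip_rb mulr0 subr0 => /ip_eq0 r0.
by apply: vecP => x; apply/eqP; rewrite -subr_eq0 -/(r x) r0.
Qed.

End OuterSum.

Definition gram A : op := opmul (opadj A) A.
Definition sandwich U A : op := opmul (opmul (opadj U) A) U.

Lemma opscaleA c1 c2 A : opscale c1 (opscale c2 A) = opscale (c1 * c2) A.
Proof. by apply: opP => x y; rewrite /opscale mulrA. Qed.

Lemma opaddr0 A : opadd A op0 = A.
Proof. by apply: opP => x y; rewrite /opadd addr0. Qed.

Lemma opsum_add m (F F' : 'I_m -> op) :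
  opsum (fun k => opadd (F k) (F' k)) = opadd (opsum F) (opsum F').
Proof. by apply: opP => x y; rewrite /opsum /opadd big_split. Qed.

Lemma gram_mul A B : gram (opmul A B) = sandwich B (gram A).
Proof. by rewrite /gram /sandwich opadj_mul !opmulA. Qed.

Lemma gramZ c A : gram (opscale c A) = opscale (c * c^*) (gram A).
Proof. by rewrite /gram opadjZ opmulZl opmulZr opscaleA mulrC. Qed.

Lemma gram0 : gram op0 = op0.
Proof. by apply: opP => x y; rewrite /gram /Defs.opmul big1 // => z _; rewrite mulr0. Qed.

Lemma gram1 : gram opid = opid.
Proof. by rewrite /gram opadj1 opmul1l. Qed.

Lemma sandwich1 A : sandwich opid A = A.
Proof. by rewrite /sandwich opadj1 opmul1l opmul1r. Qed.

Lemma sandwich_id U : sandwich U opid = gram U.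
Proof. by rewrite /sandwich opmul1r. Qed.

Lemma sandwichZ U c A : sandwich U (opscale c A) = opscale c (sandwich U A).
Proof. by rewrite /sandwich opmulZr opmulZl. Qed.

Lemma sandwich_sum U m (F : 'I_m -> op) :
  sandwich U (opsum F) = opsum (fun k => sandwich U (F k)).
Proof. by rewrite /sandwich opmul_sumr opmul_suml. Qed.

Lemma optr_sandwich_unitary (U : locop) A : (forall i, unitary (U i)) ->
  optr (sandwich (tens U) A) = optr A.
Proof. by move=> unitaryU; rewrite optr_mulC -opmulA tens_unitary // opmul1l. Qed.

Lemma optr_gram_ge0 X : 0 <= optr (gram X).
Proof.
apply: sumr_ge0 => x _; apply: sumr_ge0 => y _.
by rewrite /Defs.opadj mulrC mul_conjC_ge0.
Qed.

Lemma optr_gram_eq0 X : optr (gram X) = 0 -> X = op0.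
Proof.
move/eqP; rewrite psumr_eq0 => [/allP X0|x _]; last first.
  by apply: sumr_ge0 => y _; rewrite /Defs.opadj mulrC mul_conjC_ge0.
apply: opP => y x; move/(_ x (mem_index_enum x)): X0.
rewrite psumr_eq0 => [/allP/(_ y (mem_index_enum y))|z _]; last first.
  by rewrite /Defs.opadj mulrC mul_conjC_ge0.
by rewrite /Defs.opadj mulrC mul_conjC_eq0 => /eqP.
Qed.

Lemma optr_sum_gram_eq0 m (X : 'I_m -> op) :
  optr (opsum (fun k => gram (X k))) = 0 -> opsum (fun k => gram (X k)) = op0.
Proof.
rewrite optr_sum => /eqP; rewrite psumr_eq0 => [/allP X0|k _]; last exact: optr_gram_ge0.
apply: opP => x y; rewrite /opsum big1 // => k _.
by rewrite (optr_gram_eq0 (eqP (X0 k (mem_index_enum k)))) gram0.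
Qed.

Lemma optr_mixture m (p : 'I_m -> C) (S : 'I_m -> locop) A :
  \sum_(k < m) p k = 1 -> (forall k i, unitary (S k i)) ->
  optr (opsum (fun k => opscale (p k) (sandwich (tens (S k)) A))) = optr A.
Proof.
move=> p1 unitaryS; rewrite optr_sum.
under eq_bigr do rewrite optrZ optr_sandwich_unitary //.
by rewrite -big_distrl /= p1 mul1r.
Qed.

Definition agree (i : 'I_n) (x y : idx) := [forall j, (j != i) ==> (x j == y j)].

(* Expand a product of sums all of whose factors but the i-th are Kronecker deltas; the
   detour through val avoids casting 'I_(d j) to 'I_(d i) when j == i. *)
Lemma sum_agree i y (f : 'I_(d i) -> C) :
  \sum_(x | agree i x y) f (x i) = \sum_a f a.
Proof.
pose F j (b : 'I_(d j)) : C :=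
  if j == i then \sum_(a : 'I_(d i) | val a == val b) f a else (b == y j)%:R.
have sumF b : \sum_(a : 'I_(d i) | val a == val b) f a = f b.
  by rewrite (big_pred1 b) // => a; rewrite /= val_eqE.
have := bigA_distr_dffun F; rewrite (bigD1 i) //= {1}/F eqxx.
under eq_bigr do rewrite sumF.
rewrite [X in _ * X]big1 ?mulr1 => [->|j /negbTE ji]; last first.
  by rewrite /F ji (bigD1 (y j)) //= eqxx big1 ?addr0 // => b /negbTE ->.
rewrite big_mkcond; apply: eq_bigr => x _; rewrite (bigD1 i) //= {1}/F eqxx sumF.
case: ifPn => [/forallP agree_xy | /forallPn[j]].
  by rewrite big1 ?mulr1 // => j ji; rewrite /F (negbTE ji); move/implyP: (agree_xy j) => ->.
rewrite negb_imply => /andP[ji neq_xy].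
by rewrite (bigD1 j) //= /F (negbTE ji) (negbTE neq_xy) mul0r mulr0.
Qed.

(* ((u (x) 1) v) evaluated at the coordinates of y off party i. *)
Definition contract i (u : 'rV[C]_(d i)) v (y : idx) : C :=
  \sum_(x | agree i x y) u 0 (x i) * v x.

Lemma contractZ i (u : 'rV[C]_(d i)) c v y :
  contract u (vscale c v) y = c * contract u v y.
Proof. by rewrite /contract big_distrr; apply: eq_bigr => x _; rewrite mulrCA. Qed.

Lemma contract_tens i (u : 'rV[C]_(d i)) (T : locop) v y :
  u *m T i = 0 -> contract u (opapp (tens T) v) y = 0.
Proof.
move=> uT; rewrite /contract.
under eq_bigr do rewrite /Defs.opapp big_distrr /=.
rewrite exchange_big /= big1 // => z _.
pose rest := \prod_(j < n | j != i) T j (y j) (z j).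
transitivity (\sum_(x | agree i x y) (v z * rest) * (u 0 (x i) * T i (x i) (z i))).
  apply: eq_bigr => x agree_xy; rewrite /Defs.tens (bigD1 i) //=.
  have -> : \prod_(j < n | j != i) T j (x j) (z j) = rest.
    by apply: eq_bigr => j ji; move/forallP/(_ j): agree_xy; rewrite ji => /eqP ->.
  ring.
rewrite -big_distrr /= (sum_agree y (fun a => u 0 a * T i a (z i))).
by move/rowP/(_ (z i)): uT; rewrite !mxE => ->; rewrite mulr0.
Qed.

Lemma mul_reduced i (u : 'rV[C]_(d i)) psi b :
  (u *m reduced psi i) 0 b = \sum_(y : idx | y i == b) contract u psi y * (psi y)^*.
Proof.
rewrite !mxE; under eq_bigr do rewrite mxE big_distrr /=.
transitivity (\sum_(x : idx) \sum_(y : idx | (y i == b) && agree i x y)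
                 u 0 (x i) * (psi x * (psi y)^*)).
  rewrite (partition_big (fun x : idx => x i) predT) //=.
  by apply: eq_bigr => a _; apply: eq_bigr => x /eqP <-; rewrite big_distrr.
rewrite (exchange_big_dep (fun y : idx => y i == b)) /=; last by move=> x y _ /andP[].
apply: eq_bigr => y yb; rewrite /contract big_distrl /=.
by apply: eq_big => [x|x _]; rewrite ?yb //= mulrA.
Qed.

(* A vector u killed by T i would give u rho_i = 0, against the full rank of rho_i. *)
Lemma fully_entangled_eigen_unitmx psi (T : locop) c :
  fully_entangled psi -> c != 0 -> opapp (tens T) psi = vscale c psi ->
  forall i, T i \in unitmx.
Proof.
move=> full c0 Tpsi i; rewrite -row_free_unit -kermx_eq0.
apply/rowV0P => u /sub_kermxP uT.
have unit_rho : reduced psi i \in unitmx by rewrite -row_free_unit /row_free full.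
suff u_rho : u *m reduced psi i = 0.
  by rewrite -[u]mulmx1 -(mulmxV unit_rho) mulmxA u_rho mul0mx.
apply/rowP => b; rewrite mul_reduced mxE big1 // => y _.
have := contract_tens psi y uT; rewrite Tpsi contractZ => /eqP.
by rewrite mulf_eq0 (negbTE c0) => /eqP ->; rewrite mul0r.
Qed.

Lemma unitary1 m : unitary (1%:M : 'M[C]_m).
Proof. by rewrite /unitary /mxadj map_mx1 trmx1 mulmx1. Qed.

Lemma in_stab1 psi : in_stab psi (fun=> 1%:M).
Proof. by split=> [i|]; [exact: unitmx1 | rewrite tens1 opapp1]. Qed.

Lemma stab_eigen_unitary (i0 : 'I_n) psi (T : locop) c :
  fully_entangled psi -> stab_unitary psi -> c != 0 ->
  opapp (tens T) psi = vscale c psi ->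
  exists U : locop, [/\ forall i, unitary (U i), in_stab psi U & tens T = opscale c (tens U)].
Proof.
move=> full stab_unit c0 Tpsi.
have unitT := fully_entangled_eigen_unitmx full c0 Tpsi.
have tensS : tens (lscale i0 c^-1 T) = opscale c^-1 (tens T) by exact: tens_lscale.
have stabS : in_stab psi (lscale i0 c^-1 T).
  split; first by apply: lscale_unitmx; rewrite ?invr_eq0.
  by rewrite tensS opappZ Tpsi; apply: vecP => x; rewrite /vscale mulrA mulVf ?mul1r.
have [U [unitaryU tensU]] := stab_unit _ stabS.
exists U; split=> //.
  by split=> [i|]; [exact: unitary_unitmx | rewrite tensU; exact: stabS.2].
by rewrite tensU tensS opscaleA mulfV //; apply: opP => x y; rewrite /opscale mul1r.
Qed.

(* Writing K g = h T, the operator T fixes psi up to the factor c; when c != 0 it is c times a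
   stabilizer element, which is unitary. *)
Lemma kraus_term_decomposition (i0 : 'I_n) psi (g h K : locop) c :
  fully_entangled psi -> stab_unitary psi -> (forall i, h i \in unitmx) ->
  opapp (tens K) (opapp (tens g) psi) = vscale c (opapp (tens h) psi) ->
  exists (S : locop) (X : op), [/\ forall i, unitary (S i), in_stab psi S &
    sandwich (tens g) (gram (tens K)) =
      opadd (opscale (c * c^*) (sandwich (tens S) (gram (tens h)))) (gram X)].
Proof.
move=> full stab_unit unit_h Kg.
have [h_hinv hinv_h] := tens_linv unit_h.
pose T : locop := fun i => invmx (h i) *m K i *m g i.
have tensT : tens T = opmul (opmul (tens (linv h)) (tens K)) (tens g) by rewrite !tens_mul.
have Kg_hT : opmul (tens K) (tens g) = opmul (tens h) (tens T).
  by rewrite tensT !opmulA -(opmulA (tens h)) h_hinv opmul1l.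
have Tpsi : opapp (tens T) psi = vscale c psi.
  by rewrite tensT !opapp_mul Kg opappZv -opapp_mul hinv_h opapp1.
rewrite -gram_mul Kg_hT.
have [c0|c0] := eqVneq c 0.
  exists (fun=> 1%:M), (opmul (tens h) (tens T)).
  split; [move=> i; exact: unitary1 | exact: in_stab1 |].
  by apply: opP => x y; rewrite c0 mul0r /opadd /opscale mul0r add0r.
have [U [unitaryU stabU ->]] := stab_eigen_unitary i0 full stab_unit c0 Tpsi.
by exists U, op0; split=> //; rewrite gram0 opaddr0 opmulZr gramZ gram_mul.
Qed.

Definition stab_mixture psi (H G : op) : Prop :=
  exists m (p : 'I_m -> C) (S : 'I_m -> locop),
    (forall k, 0 <= p k) /\ \sum_(k < m) p k = 1 /\ (forall k, in_stab psi (S k)) /\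
    opsum (fun k => opscale (p k) (sandwich (tens (S k)) H)) = G.

Lemma stab_mixture_refl psi A : stab_mixture psi A A.
Proof.
exists 1%N, (fun=> 1), (fun=> fun=> 1%:M); split=> [k|]; first exact: ler01.
split; first by rewrite big_ord1.
split=> [k|]; first exact: in_stab1.
by apply: opP => x y; rewrite /opsum big_ord1 tens1 sandwich1 /opscale mul1r.
Qed.

Lemma sep1_refl v : sep1_transforms v v.
Proof.
exists 1%N, (fun=> fun=> 1%:M); do !split.
- by move=> k i; exact: unitmx1.
- by apply: opP => x y; rewrite big_ord1 tens1 opadj1 opmul1l.
- by apply: opP => x y; rewrite kraus_apply_outer big_ord1 tens1 opapp1.
Qed.

Lemma sep1_sep v w : sep1_transforms v w -> sep_transforms v w.
Proof. by case=> m [K [_ KTP]]; exists m, K. Qed.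

Lemma tens_n0 (K : locop) : n = 0%N -> tens K = opid.
Proof.
move=> n0; apply: opP => x y.
have no_party (i : 'I_n) : False by case: i => i; rewrite n0.
have -> : x = y by apply/ffunP => i; case: (no_party i).
by rewrite /Defs.tens /Defs.opid eqxx big1 // => i; case: (no_party i).
Qed.

Section Transformation.
Variables (i0 : 'I_n) (psi : vec) (g h : locop).
Hypotheses (full : fully_entangled psi) (stab_unit : stab_unitary psi).
Hypotheses (unit_g : forall i, g i \in unitmx) (unit_h : forall i, h i \in unitmx).
Hypothesis norm_h : vnorm2 (opapp (tens h) psi) = 1.
Local Notation G := (gram (tens g)).
Local Notation H := (gram (tens h)).
Local Notation gpsi := (opapp (tens g) psi).
Local Notation hpsi := (opapp (tens h) psi).

Lemma sep_decomposition : sep_transforms gpsi hpsi ->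
  exists m (p : 'I_m -> C) (S : 'I_m -> locop) (X : 'I_m -> op),
  [/\ forall k, 0 <= p k, \sum_(k < m) p k = 1, forall k i, unitary (S k i),
      forall k, in_stab psi (S k) &
      G = opadd (opsum (fun k => opscale (p k) (sandwich (tens (S k)) H)))
                (opsum (fun k => gram (X k)))].
Proof.
case=> m [K [KTP Kout]].
have outer_sum x y : \sum_(k < m) opapp (tens (K k)) gpsi x * (opapp (tens (K k)) gpsi y)^*
    = hpsi x * (hpsi y)^*.
  by rewrite -kraus_apply_outer Kout.
have [collinear sum1] := outer_sum_collinear outer_sum norm_h.
have /fin_all_exists[S] := fun k =>
  kraus_term_decomposition i0 full stab_unit unit_h (collinear k).
move=> /fin_all_exists[X decomp].
pose c k := ip hpsi (opapp (tens (K k)) gpsi).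
exists m, (fun k => c k * (c k)^*), S, X; split=> [k|//|k|k|]; first exact: mul_conjC_ge0.
- by have [] := decomp k.
- by have [] := decomp k.
have KTP' : opsum (fun k => gram (tens (K k))) = opid := KTP.
rewrite -sandwich_id -KTP' sandwich_sum -opsum_add.
by congr opsum; apply: functional_extensionality => k; have [] := decomp k.
Qed.

Lemma sep_optr_le : sep_transforms gpsi hpsi -> optr H <= optr G.
Proof.
case/sep_decomposition => m [p [S [X [_ p1 unitaryS _ ->]]]].
rewrite optrD optr_mixture // lerDl optr_sum.
by apply: sumr_ge0 => k _; exact: optr_gram_ge0.
Qed.

Lemma sep_optr_eq_mixture : sep_transforms gpsi hpsi -> optr G = optr H ->
  stab_mixture psi H G.
Proof.
case/sep_decomposition => m [p [S [X [p_ge0 p1 unitaryS stabS decG]]]].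
rewrite {1}decG optrD optr_mixture // -[RHS]addr0 => /addrI/optr_sum_gram_eq0 X0.
by exists m, p, S; do !split=> //; rewrite decG X0 opaddr0.
Qed.

Lemma stab_mixture_support A B : stab_mixture psi A B ->
  exists m (p : 'I_m -> C) (S : 'I_m -> locop),
    (forall k, 0 < p k) /\ \sum_(k < m) p k = 1 /\ (forall k, in_stab psi (S k)) /\
    opsum (fun k => opscale (p k) (sandwich (tens (S k)) A)) = B.
Proof.
case=> m [p [S [p_ge0 [p1 [stabS mixB]]]]].
pose supp := [pred k | p k != 0].
exists #|supp|, (fun j => p (enum_val j)), (fun j => S (enum_val j)).
split=> [j|]; first by rewrite lt0r p_ge0 andbT; exact: (enum_valP j).
split; first by rewrite (sum_enum_val_support (A := supp)) // => k /negPn/eqP.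
split=> [j|]; first exact: stabS.
rewrite -mixB; apply: opP => x y.
by apply: (sum_enum_val_support (A := supp)) => k /negPn/eqP p0; rewrite /opscale p0 mul0r.
Qed.

(* Only the k with p_k > 0 are kept: the local factors of a SEP_1 Kraus operator must be
   invertible. *)
Lemma stab_mixture_sep1 : stab_mixture psi H G -> sep1_transforms gpsi hpsi.
Proof.
case/stab_mixture_support => m [p [S [p_gt0 [p1 [stabS mixG]]]]].
have [g_ginv ginv_g] := tens_linv unit_g.
pose K k := lscale i0 (sqrtC (p k)) (fun i => h i *m S k i *m linv g i).
have tensK k : tens (K k) =
    opscale (sqrtC (p k)) (opmul (opmul (tens h) (tens (S k))) (tens (linv g))).
  by rewrite tens_lscale !tens_mul.
have sqrt_p k : sqrtC (p k) * (sqrtC (p k))^* = p k.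
  by rewrite geC0_conj ?sqrtC_ge0 ?ltW // -expr2 sqrtCK.
exists m, K; split=> [k i|]; [|split].
- apply: lscale_unitmx => [|j]; first by rewrite sqrtC_eq0 lt0r_neq0.
  by rewrite !unitmx_mul unit_h (stabS k).1 unitmx_inv unit_g.
- change (opsum (fun k => gram (tens (K k))) = opid).
  rewrite -gram1 -g_ginv gram_mul -mixG sandwich_sum; congr opsum.
  apply: functional_extensionality => k.
  by rewrite tensK gramZ sqrt_p !gram_mul sandwichZ.
- have Kgpsi k : opapp (tens (K k)) gpsi = vscale (sqrtC (p k)) hpsi.
    by rewrite tensK opappZ !opapp_mul -(opapp_mul (tens (linv g))) ginv_g opapp1 (stabS k).2.
  apply: opP => x y; rewrite kraus_apply_outer.
  under eq_bigr do rewrite Kgpsi /vscale rmorphM mulrACA sqrt_p.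
  by rewrite -big_distrl /= p1 mul1r.
Qed.

End Transformation.

End Operators.

Theorem lemma2 (R : realType) (n : nat) (d : 'I_n -> nat) (psi : vec R d)
    (g h : locop R d) :
  fully_entangled psi ->
  stab_unitary psi ->
  (forall i, g i \in unitmx) -> (forall i, h i \in unitmx) ->
  vnorm2 (opapp (tens g) psi) = 1 ->
  vnorm2 (opapp (tens h) psi) = 1 ->
  let G := opmul (opadj (tens g)) (tens g) in
  let H := opmul (opadj (tens h)) (tens h) in
  (sep_transforms (opapp (tens g) psi) (opapp (tens h) psi) ->
     optr H <= optr G) /\
  (optr G = optr H ->
     (sep_transforms (opapp (tens g) psi) (opapp (tens h) psi) <->
        exists m (p : 'I_m -> R[i]) (S : 'I_m -> locop R d),
          (forall k, 0 <= p k) /\ \sum_(k < m) p k = 1 /\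
          (forall k, in_stab psi (S k)) /\
          (fun x y => \sum_(k < m) p k *
              opmul (opmul (opadj (tens (S k))) H) (tens (S k)) x y) = G) /\
     (sep_transforms (opapp (tens g) psi) (opapp (tens h) psi) <->
        sep1_transforms (opapp (tens g) psi) (opapp (tens h) psi))).
Proof.
move=> full stab_unit unit_g unit_h _ norm_h G H.
(* A scalar can only be absorbed into a local factor when there is at least one party. *)
have [n0|n_gt0] := posnP n.
  have -> : G = H by rewrite /G /H !tens_n0.
  have -> : opapp (tens g) psi = opapp (tens h) psi by rewrite !tens_n0.
  have sep_refl := sep1_sep (sep1_refl (opapp (tens h) psi)).
  split=> // _; split; split=> // _; [exact: stab_mixture_refl | exact: sep1_refl].
pose i0 := Ordinal n_gt0.
split; first exact: (sep_optr_le (g := g) i0 full stab_unit unit_h norm_h).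
move=> trGH; have mix_sep1 := stab_mixture_sep1 i0 unit_g unit_h.
have sep_mix s := sep_optr_eq_mixture i0 full stab_unit unit_h norm_h s trGH.
by split; [split=> [/sep_mix | /mix_sep1/sep1_sep] | split=> [/sep_mix/mix_sep1 | /sep1_sep]].
Qed.
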